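(* Let $n\in\mathbb{N}$. (i) The map $\mathcal{T}_n:\mathcal{RBC}_n\to\mathcal{P}(\Theta)$ is continuous when $\mathcal{P}(\Theta)$ carries the weak topology. (ii) For every $p\in[1,\infty)$, the map $\mathcal{T}_n:\mathcal{RBC}_n\to\mathcal{P}_p(\Theta)$ is continuous when $\mathcal{P}_p(\Theta)$ carries the topology whose neighborhood basis at $G_0$ consists of sets $\{G:|\int f_i\,d(G-G_0)|<\varepsilon_i,\ i=1,\ldots,m\}$, possibly intersected with $\{G:|\int|\theta|^p\,d(G-G_0)(\theta)|<\varepsilon_0\}$, for bounded continuous $f_i$ and $\varepsilon_i>0$.
   Context: $\Theta\subseteq\mathbb{R}$ is $\mathbb{R}$, a closed half-line, or a compact interval with nonempty interior; $\mathcal{P}(\Theta)$ and $\mathcal{P}_p(\Theta)$ are Borel probability measures on $\Theta$ (resp. with finite $p$-th moment). SBA of a measure $G$ with finite mean: $\mu_{1,1}=\int\theta\,dG$; $\mu_{j,2l}=\mu_{j-1,l}$, $\mu_{j,2l-1}=b_G(\mu_{j-1,l-1},\mu_{j-1,l}]$ where $b_G(a_1,a_2]=\int_{(a_1,a_2]}\theta\,dG/(G(a_2)-G(a_1))$ (or $a_1$ if the mass is zero), $\mu_{j,0}=\inf\Theta$, $\mu_{j,2^j}=\sup\Theta$; $G$ has a regular level $n$ SBA if $\mu_{n,1},\ldots,\mu_{n,2^n-1}$ are distinct. $\mathcal{RBC}_n$ is the set of arrays $(\mu_{j,l})_{1\le j\le n+1,1\le l\le 2^j-1}$ consisting of the first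 $n+1$ rows of the SBA of some measure with a regular level $n$ SBA, with the subspace topology of Euclidean space. $\mathcal{T}_n$ maps such an array to $\sum_{l=1}^{2^n}w_{n,l}\delta_{\mu_{n+1,2l-1}}$ with $w_{n,l}=F(\mu_{n,l})-F(\mu_{n,l-1})$, where $F(\mu_{j,0})=0$, $F(\mu_{j,2^j})=1$, $F(\mu_{j,2l})=F(\mu_{j-1,l})$ and, for $1\le j\le n$, $F(\mu_{j,2l-1})=F(\mu_{j-1,l-1})+[F(\mu_{j-1,l})-F(\mu_{j-1,l-1})]\frac{\mu_{j+1,4l-1}-\mu_{j+1,4l-2}}{\mu_{j+1,4l-1}-\mu_{j+1,4l-3}}$ ($0/0=1$). *)

From HB Require Import structures.
From mathcomp Require Import all_boot all_order all_algebra.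
From mathcomp Require Import all_classical all_reals all_analysis.
Set Implicit Arguments. Unset Strict Implicit. Unset Printing Implicit Defensive.
Import Order.TTheory GRing.Theory Num.Theory.
Import numFieldNormedType.Exports.
Local Open Scope classical_set_scope.
Local Open Scope ring_scope.

Section Defs.
Variable R : realType.

Definition admissible_Theta (Th : set R) : Prop :=
  Th = setT
  \/ (exists a : R, Th = [set x | a <= x])
  \/ (exists a : R, Th = [set x | x <= a])
  \/ (exists a b : R, a < b /\ Th = [set x | a <= x <= b]).

Definition infTh (Th : set R) : \bar R := ereal_inf (EFin @` Th).
Definition supTh (Th : set R) : \bar R := ereal_sup (EFin @` Th).

Variable G : probability R R.

Definition ocI (a1 a2 : \bar R) : set R := [set x | (a1 < x%:E)%E /\ (x%:E <= a2)%E].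

Definition bG (a1 a2 : \bar R) : \bar R :=
  if G (ocI a1 a2) == 0%E then a1
  else (fine (\int[G]_(x in ocI a1 a2) x%:E) / fine (G (ocI a1 a2)))%:E.

(* SBA: sba Th j l = mu_{j,l}, for j >= 1 and 0 <= l <= 2^j *)
Fixpoint sba (Th : set R) (j : nat) : nat -> \bar R :=
  match j with
  | 0 => fun _ => 0%E
  | j'.+1 =>
    match j' with
    | 0 => fun l => if l == 0%N then infTh Th else if l == 1%N then
                     (\int[G]_x x%:E)%E else supTh Th
    | _ => fun l =>
      if l == 0%N then infTh Th
      else if l == (2 ^ j)%N then supTh Th
      else if odd l then bG (sba Th j' l./2) (sba Th j' (l./2).+1)
      else sba Th j' l./2
    end
  end.
End Defs.

Section Defs2.
Variable R : realType.

Definition has_support (Th : set R) (G : probability R R) : Prop :=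
  G (~` Th) = 0%E.

Definition finite_mean (G : probability R R) : Prop :=
  G.-integrable setT (fun x : R => x%:E).

Definition regular_SBA (Th : set R) (G : probability R R) (n : nat) : Prop :=
  forall l1 l2 : nat, (0 < l1 < 2 ^ n)%N -> (0 < l2 < 2 ^ n)%N -> l1 != l2 ->
    sba G Th n l1 != sba G Th n l2.

(* arrays (mu_{j,l})_{1<=j<=n+1, 1<=l<=2^j-1}, stored as x j l *)
Definition RBC (Th : set R) (n : nat) (x : nat -> nat -> R) : Prop :=
  exists G : probability R R,
    [/\ has_support Th G, finite_mean G, regular_SBA Th G n &
      forall j l : nat, (1 <= j <= n.+1)%N -> (1 <= l < 2 ^ j)%N ->
        sba G Th j l = (x j l)%:E].

Definition arr_dist (n : nat) (x y : nat -> nat -> R) : R :=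
  Num.sqrt (\sum_(1 <= j < n.+2) \sum_(1 <= l < 2 ^ j) (x j l - y j l) ^+ 2).

Definition ratio00 (a b : R) : R := if (a == 0) && (b == 0) then 1 else a / b.

(* Fw x j l = F(mu_{j,l}) *)
Fixpoint Fw (x : nat -> nat -> R) (j : nat) : nat -> R :=
  match j with
  | 0 => fun l => if l == 0%N then 0 else 1
  | j'.+1 => fun l =>
    if l == 0%N then 0
    else if l == (2 ^ j)%N then 1
    else if odd l then
      let l' := (l./2).+1 in
      Fw x j' (l' - 1) + (Fw x j' l' - Fw x j' (l' - 1)) *
        ratio00 (x j.+1 (4 * l' - 1)%N - x j.+1 (4 * l' - 2)%N)
                (x j.+1 (4 * l' - 1)%N - x j.+1 (4 * l' - 3)%N)
    else Fw x j' l./2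
  end.

Definition Tweight (n : nat) (x : nat -> nat -> R) (l : nat) : R :=
  Fw x n l - Fw x n (l - 1).

Definition Tatom (n : nat) (x : nat -> nat -> R) (l : nat) : R :=
  x n.+1 (2 * l - 1)%N.

(* integral of f against T_n(x) = sum_{l=1}^{2^n} w_{n,l} delta_{mu_{n+1,2l-1}} *)
Definition Tint (n : nat) (x : nat -> nat -> R) (f : R -> R) : R :=
  \sum_(1 <= l < (2 ^ n).+1) Tweight n x l * f (Tatom n x l).

Definition bounded_on (Th : set R) (f : R -> R) : Prop :=
  exists M : R, forall t, Th t -> `|f t| <= M.

End Defs2.

From HB Require Import structures.
From mathcomp Require Import all_boot all_order all_algebra.
From mathcomp Require Import all_classical all_reals all_analysis.
From mathcomp Require Import measurable_realfun.
From mathcomp Require Import zify ring lra.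
Import Order.TTheory GRing.Theory Num.Theory.
Import numFieldNormedType.Exports.
Local Open Scope classical_set_scope.
Local Open Scope ring_scope.
Set Implicit Arguments. Unset Strict Implicit. Unset Printing Implicit Defensive.

(* Group the atoms of T_n x in pairs 2k+1, 2k+2.  The pair carries the weight
   F(mu_{n-1,k+1}) - F(mu_{n-1,k}), which the recursion builds from ratios of
   gaps in rows 2, ..., n of the array; regularity keeps all their denominators
   away from 0, so this weight depends continuously on x.  Inside the pair it is
   split between the atoms mu_{n+1,4k+1} <= mu_{n+1,4k+3} so that their
   barycentre is mu_{n+1,4k+2}; this split is a ratio of gaps in row n+1 and may
   be 0/0.  But where the two atoms merge in the limit the split no longer
   matters: f is continuous on Theta and both atoms converge to the same point
   of Theta.  Since T_n x is finitely supported, the test functions need not be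
   bounded. *)

Section Theta_bounds.
Variables (R : realType) (Th : set R).

Lemma infTh_le t : Th t -> (infTh Th <= t%:E)%E.
Proof. by move=> Tht; apply: ereal_inf_lbound; exists t. Qed.

Lemma supTh_ge t : Th t -> (t%:E <= supTh Th)%E.
Proof. by move=> Tht; apply: ereal_sup_ubound; exists t. Qed.

Lemma infTh_ge a : (forall t, Th t -> a <= t) -> (a%:E <= infTh Th)%E.
Proof. by move=> aTh; apply: le_ereal_inf_tmp => _ [t /aTh ? <-]. Qed.

Lemma supTh_le b : (forall t, Th t -> t <= b) -> (supTh Th <= b%:E)%E.
Proof. by move=> Thb; apply: ge_ereal_sup => _ [t /Thb ? <-]. Qed.

End Theta_bounds.

Section admissible_Theta.
Variables (R : realType) (Th : set R).
Hypothesis admTh : admissible_Theta Th.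

Lemma admissible_closed : closed Th.
Proof.
case: admTh => [->|[[a ->]|[[a ->]|[a [b [_ ->]]]]]].
- exact: closedT.
- exact: closed_ge.
- exact: closed_le.
- rewrite (_ : [set x | a <= x <= b] = [set x | a <= x] `&` [set x | x <= b]).
    by apply: closedI; [exact: closed_ge|exact: closed_le].
  by apply/seteqP; split => x /=; [move/andP|move=> [-> ->]].
Qed.

Lemma admissible_measurable : measurable Th.
Proof. exact: closed_measurable admissible_closed. Qed.

Lemma admissible_between t :
  (infTh Th <= t%:E)%E -> (t%:E <= supTh Th)%E -> Th t.
Proof.
have ge_lb a (S : set R) : (forall x, S x -> a <= x) -> (infTh S <= t%:E)%E -> a <= t.
  by move=> aS /(le_trans (infTh_ge aS)); rewrite lee_fin.
have le_ub b (S : set R) : (forall x, S x -> x <= b) -> (t%:E <= supTh S)%E -> t <= b.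
  by move=> Sb /le_trans/(_ (supTh_le Sb)); rewrite lee_fin.
case: admTh => [->|[[a ->]|[[a ->]|[a [b [_ ->]]]]]] //= tinf tsup.
- exact: ge_lb tinf.
- exact: le_ub tsup.
- by rewrite (ge_lb a _ _ tinf) ?(le_ub b _ _ tsup) // => x /andP[].
Qed.

End admissible_Theta.

Section conditional_mean.
Variables (R : realType) (Th : set R) (G : probability R R).
Hypotheses (mTh : measurable Th) (suppG : has_support Th G) (meanG : finite_mean G).

Definition cond_mean (A : set R) : R :=
  fine (\int[G]_(x in A) x%:E) / fine (G A).

Lemma measure_outside_support (A : set R) : measurable A ->
  (forall t, A t -> ~ Th t) -> G A = 0%E.
Proof.
move=> mA ANTh; apply/eqP; rewrite eq_le measure_ge0 andbT -suppG.
by apply: le_measure; rewrite ?inE //; exact: measurableC.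
Qed.

Lemma le_integral_support (A : set R) (f g : R -> \bar R) : measurable A ->
  G.-integrable A f -> G.-integrable A g ->
  (forall t, A t -> Th t -> (f t <= g t)%E) ->
  (\int[G]_(x in A) f x <= \int[G]_(x in A) g x)%E.
Proof.
move=> mA intf intg fg; have mNTh : measurable (~` Th) by exact: measurableC.
rewrite (negligible_integral mNTh mA intf suppG).
rewrite (negligible_integral mNTh mA intg suppG).
have mATh := measurableD mA mNTh; have subA : A `\` ~` Th `<=` A by exact: subDsetl.
apply: le_integral => //; [exact: integrableS intf|exact: integrableS intg|].
by move=> t /set_mem[At /contrapT]; exact: fg.
Qed.

Lemma integral_id_ge (A : set R) c : measurable A ->
  (forall t, A t -> Th t -> c <= t) -> (c%:E * G A <= \int[G]_(x in A) x%:E)%E.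
Proof.
move=> mA cA; rewrite -integral_cst //.
apply: le_integral_support => //; last exact: integrableS meanG.
exact: finite_measure_integrable_cst.
Qed.

Lemma integral_id_le (A : set R) c : measurable A ->
  (forall t, A t -> Th t -> t <= c) -> (\int[G]_(x in A) x%:E <= c%:E * G A)%E.
Proof.
move=> mA Ac; rewrite -integral_cst //.
apply: le_integral_support => //; first exact: integrableS meanG.
exact: finite_measure_integrable_cst.
Qed.

Lemma cond_meanE (A : set R) : measurable A -> G A != 0%E ->
  [/\ 0 < fine (G A), G A = (fine (G A))%:E &
      (\int[G]_(x in A) x%:E = (fine (\int[G]_(x in A) x%:E))%:E)%E].
Proof.
move=> mA GA0; have GAfin : G A \is a fin_num by exact: fin_num_measure.
split; [|by rewrite fineK|].
- by rewrite -lte_fin fineK // lt_def GA0 measure_ge0.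
- by rewrite fineK // integrable_fin_num //; exact: integrableS meanG.
Qed.

Lemma cond_mean_ge (A : set R) lo : measurable A -> G A != 0%E ->
  (forall t, A t -> Th t -> (lo <= t%:E)%E) -> (lo <= (cond_mean A)%:E)%E.
Proof.
move=> mA GA0 loA; have [GA_gt0 GAE intE] := cond_meanE mA GA0.
case: lo loA => [r| |] loA; last exact: leNye.
- rewrite lee_fin ler_pdivlMr // -lee_fin EFinM -GAE -intE.
  by apply: integral_id_ge => // t At Tht; rewrite -lee_fin loA.
- case/eqP: GA0; apply: measure_outside_support => // t At Tht.
  by have := loA t At Tht; rewrite leNgt ltey.
Qed.

Lemma cond_mean_le (A : set R) up : measurable A -> G A != 0%E ->
  (forall t, A t -> Th t -> (t%:E <= up)%E) -> ((cond_mean A)%:E <= up)%E.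
Proof.
move=> mA GA0 Aup; have [GA_gt0 GAE intE] := cond_meanE mA GA0.
case: up Aup => [r| |] Aup; [|exact: leey|].
- rewrite lee_fin ler_pdivrMr // -lee_fin EFinM -GAE -intE.
  by apply: integral_id_le => // t At Tht; rewrite -lee_fin Aup.
- case/eqP: GA0; apply: measure_outside_support => // t At Tht.
  by have := Aup t At Tht; rewrite leNgt ltNye.
Qed.

Lemma ocI_measurable (a1 a2 : \bar R) : measurable (ocI a1 a2).
Proof.
rewrite (_ : ocI a1 a2 = EFin @^-1` `]a1, a2]).
  rewrite -[X in measurable X]setTI.
  by apply: EFin_measurable => //; exact: emeasurable_itv.
by apply/seteqP; split => x; rewrite /ocI /= in_itv /=; [case=> -> ->|case/andP].
Qed.

Lemma bG_between (a1 a2 : \bar R) : (a1 <= a2)%E ->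
  (a1 <= bG G a1 a2)%E /\ (bG G a1 a2 <= a2)%E.
Proof.
rewrite /bG => a12; case: ifPn => // GI0; split.
- by apply: cond_mean_ge GI0 _ => [|t [/ltW]//]; exact: ocI_measurable.
- by apply: cond_mean_le GI0 _ => [|t []//]; exact: ocI_measurable.
Qed.

Lemma mean_between :
  (infTh Th <= \int[G]_x x%:E)%E /\ (\int[G]_x x%:E <= supTh Th)%E.
Proof.
have G1 : G setT != 0%E by rewrite probability_setT oner_neq0.
have [_ _ ->] := cond_meanE measurableT G1.
have -> : fine (\int[G]_x x%:E) = cond_mean setT.
  by rewrite /cond_mean probability_setT divr1.
split; [apply: cond_mean_ge|apply: cond_mean_le] => // t _.
- exact: infTh_le.
- exact: supTh_ge.
Qed.

End conditional_mean.

Section sba_recursion.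
Variables (R : realType) (Th : set R) (G : probability R R).

Lemma sbaSS j l : sba G Th j.+2 l =
  if l == 0%N then infTh Th else if l == (2 ^ j.+2)%N then supTh Th
  else if odd l then bG G (sba G Th j.+1 l./2) (sba G Th j.+1 l./2.+1)
  else sba G Th j.+1 l./2.
Proof. by []. Qed.

Lemma sba0 j : (0 < j)%N -> sba G Th j 0 = infTh Th.
Proof. by case: j => [|[]]. Qed.

Lemma sba_top j : (0 < j)%N -> sba G Th j (2 ^ j) = supTh Th.
Proof. by case: j => [|[|j]] // _; rewrite sbaSS expn_eq0 eqxx. Qed.

Lemma sba_double j k : (0 < j)%N -> (k <= 2 ^ j)%N ->
  sba G Th j.+1 k.*2 = sba G Th j k.
Proof.
case: j => [//|j] _ k_le; rewrite sbaSS double_eq0.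
have [->|k_gt0] := posnP k; first by rewrite sba0.
have [->|k_neq] := eqVneq k (2 ^ j.+1)%N; first by rewrite -mul2n -expnS eqxx sba_top.
by rewrite -mul2n expnS eqn_pmul2l // (negbTE k_neq) mul2n odd_double doubleK.
Qed.

Lemma sba_doubleS j k : (0 < j)%N ->
  sba G Th j.+1 k.*2.+1 = bG G (sba G Th j k) (sba G Th j k.+1).
Proof.
case: j => [//|j] _; rewrite sbaSS.
have -> : (k.*2.+1 == 2 ^ j.+2)%N = false.
  by apply/negbTE/negP => /eqP/(congr1 odd); rewrite /= odd_double expnS oddM.
by rewrite /= odd_double /= uphalf_double.
Qed.

Lemma sba_mul_exp2 j i a : (0 < j)%N -> (a <= 2 ^ j)%N ->
  sba G Th (j + i) (a * 2 ^ i) = sba G Th j a.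
Proof.
move=> j_gt0 a_le; elim: i => [|i IH]; first by rewrite addn0 muln1.
rewrite addnS expnS mulnCA mul2n sba_double ?IH ?addn_gt0 ?j_gt0 //.
by rewrite expnD leq_mul2r a_le orbT.
Qed.

End sba_recursion.

Section sba_sorted.
Variables (R : realType) (Th : set R) (G : probability R R).
Hypotheses (admTh : admissible_Theta Th) (suppG : has_support Th G)
  (meanG : finite_mean G).

Lemma sba_le_succ j l : (0 < j)%N -> (l < 2 ^ j)%N ->
  (sba G Th j l <= sba G Th j l.+1)%E.
Proof.
elim: j l => // -[_ l _|j IH l _] l_lt.
  have [] := mean_between (admissible_measurable admTh) suppG meanG.
  by case: l l_lt => [|[]].
have k_lt : (l./2 < 2 ^ j.+1)%N by rewrite ltn_half_double -mul2n -expnS.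
have [bG_ge bG_le] :=
  bG_between (admissible_measurable admTh) suppG meanG (IH _ isT k_lt).
rewrite -(odd_double_half l); case: (odd l).
- by rewrite add1n -doubleS sba_double // sba_doubleS.
- by rewrite add0n sba_doubleS // sba_double // ltnW.
Qed.

Lemma sba_homo j l1 l2 : (0 < j)%N -> (l1 <= l2 <= 2 ^ j)%N ->
  (sba G Th j l1 <= sba G Th j l2)%E.
Proof.
move=> j_gt0 /andP[]; elim: l2 => [|l2 IH]; first by rewrite leqn0 => /eqP ->.
rewrite leq_eqVlt => /orP[/eqP <- //|l1_le l2_lt].
exact: le_trans (IH l1_le (ltnW l2_lt)) (sba_le_succ j_gt0 l2_lt).
Qed.

Lemma sba_in_Theta j l r : (0 < j)%N -> (l <= 2 ^ j)%N ->
  sba G Th j l = r%:E -> Th r.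
Proof.
move=> j_gt0 l_le sba_r; apply: (admissible_between admTh); rewrite -sba_r.
- by rewrite -(sba0 Th G j_gt0); apply: sba_homo.
- by rewrite -(sba_top Th G j_gt0); apply: sba_homo => //; rewrite l_le leqnn.
Qed.

End sba_sorted.

Section two_point_integral.
Variable R : realType.

Definition split_ratio (u m v : R) : R := ratio00 (v - m) (v - u).

(* For u < v, the integral of f against the probability measure on {u, v}
   with mean m; for u = v the convention 0/0 = 1 puts all the mass on u. *)
Definition two_point_int (f : R -> R) (u m v : R) : R :=
  split_ratio u m v * f u + (1 - split_ratio u m v) * f v.

Lemma split_ratio_ge0_le1 (u m v : R) : u <= m <= v -> 0 <= split_ratio u m v <= 1.
Proof.
move=> /andP[um mv]; rewrite /split_ratio /ratio00.
have [vu0|vu_neq0] := eqVneq (v - u) 0.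
  have -> : v - m = 0 by apply/eqP; rewrite subr_eq0 eq_le mv; move/eqP: vu0; lra.
  by rewrite eqxx ler01 lexx.
have vu_gt0 : 0 < v - u by rewrite lt_def vu_neq0 subr_ge0 (le_trans um mv).
rewrite andbF divr_ge0 ?subr_ge0 ?(le_trans um mv) //= ler_pdivrMr // mul1r.
lra.
Qed.

Lemma two_point_int_same (f : R -> R) u m : two_point_int f u m u = f u.
Proof. by rewrite /two_point_int; ring. Qed.

Variables (T : Type) (F : set_system T).
Context {FF : Filter F}.

Lemma ratio00_cvg (a b : T -> R) (a0 b0 : R) :
  a @ F --> a0 -> b @ F --> b0 -> b0 != 0 ->
  ratio00 (a x) (b x) @[x --> F] --> ratio00 a0 b0.
Proof.
move=> aa0 bb0 b0_neq0; rewrite {2}/ratio00 (negbTE b0_neq0) andbF.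
apply: cvg_trans (cvgM aa0 (cvgV b0_neq0 bb0)); apply: near_eq_cvg.
apply: filterS (cvgr_neq0 b0 bb0 b0_neq0) => x bx_neq0.
by rewrite /ratio00 (negbTE bx_neq0) andbF.
Qed.

Lemma cvg_within_comp (Th : set R) (f : R -> R) (u : T -> R) (u0 : R) :
  {within Th, continuous f} -> u @ F --> u0 -> Th u0 ->
  (\forall x \near F, Th (u x)) -> f (u x) @[x --> F] --> f u0.
Proof.
move=> fc uu0 Thu0 Thu P /= fu0P.
have Thu0_fP : within Th (nbhs u0) (f @^-1` P).
  by rewrite (nbhs_subspace_in Thu0); exact: fc u0 _ fu0P.
have uP : \forall x \near F, Th (u x) -> P (f (u x)) by exact: uu0 _ Thu0_fP.
by apply: filterS (filterI uP Thu) => x [/[apply]].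
Qed.

Lemma cvg_convex_comb (r a b : T -> R) (c : R) : a @ F --> c -> b @ F --> c ->
  (\forall x \near F, 0 <= r x <= 1) -> r x * a x + (1 - r x) * b x @[x --> F] --> c.
Proof.
move=> ac bc r01; apply/cvgrPdist_le => e e_gt0.
move/cvgrPdist_le/(_ e e_gt0): ac => near_ae.
move/cvgrPdist_le/(_ e e_gt0): bc => near_be.
near=> x.
have /andP[r_ge0 r_le1] : 0 <= r x <= 1 by near: x.
have ae : `|c - a x| <= e by near: x.
have be : `|c - b x| <= e by near: x.
rewrite (_ : c - _ = r x * (c - a x) + (1 - r x) * (c - b x)); last by ring.
have rC_ge0 : 0 <= 1 - r x by rewrite subr_ge0.
apply: le_trans (ler_normD _ _) _.
rewrite !normrM (ger0_norm r_ge0) (ger0_norm rC_ge0).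
by have := ler_wpM2l r_ge0 ae; have := ler_wpM2l rC_ge0 be; lra.
Unshelve. all: by end_near.
Qed.

Lemma two_point_int_cvg (Th : set R) (f : R -> R) (u m v : T -> R) (u0 m0 v0 : R) :
  {within Th, continuous f} ->
  u @ F --> u0 -> m @ F --> m0 -> v @ F --> v0 ->
  Th u0 -> Th v0 -> u0 <= m0 <= v0 ->
  (\forall x \near F, [/\ Th (u x), Th (v x) & u x <= m x <= v x]) ->
  two_point_int f (u x) (m x) (v x) @[x --> F] --> two_point_int f u0 m0 v0.
Proof.
move=> fc uu0 mm0 vv0 Thu0 Thv0 umv0 near_umv.
have Thu : \forall x \near F, Th (u x) by apply: filterS _ near_umv => x [].
have Thv : \forall x \near F, Th (v x) by apply: filterS _ near_umv => x [].
have fu := cvg_within_comp fc uu0 Thu0 Thu.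
have fv := cvg_within_comp fc vv0 Thv0 Thv.
have [vu0|vu0_neq0] := eqVneq v0 u0.
  rewrite vu0 two_point_int_same /two_point_int in fv *.
  apply: cvg_convex_comb => //.
  by apply: filterS _ near_umv => x [_ _ /split_ratio_ge0_le1].
have ratio_cvg : split_ratio (u x) (m x) (v x) @[x --> F] --> split_ratio u0 m0 v0.
  by apply: ratio00_cvg; [exact: cvgB|exact: cvgB|rewrite subr_eq0].
by apply: cvgD; apply: cvgM => //; apply: cvgB => //; exact: cvg_cst.
Qed.

End two_point_integral.

Section Fw_recursion.
Variable R : realType.
Implicit Types x : nat -> nat -> R.

Lemma FwS x j l : Fw x j.+1 l =
  if l == 0%N then 0 else if l == (2 ^ j.+1)%N then 1
  else if odd l then
    Fw x j (l./2.+1 - 1) + (Fw x j l./2.+1 - Fw x j (l./2.+1 - 1)) *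
      ratio00 (x j.+2 (4 * l./2.+1 - 1)%N - x j.+2 (4 * l./2.+1 - 2)%N)
              (x j.+2 (4 * l./2.+1 - 1)%N - x j.+2 (4 * l./2.+1 - 3)%N)
  else Fw x j l./2.
Proof. by []. Qed.

Lemma Fw0 x j : Fw x j 0 = 0.
Proof. by case: j. Qed.

Lemma Fw_top x j : Fw x j (2 ^ j) = 1.
Proof. by case: j => // j; rewrite FwS expn_eq0 eqxx. Qed.

Lemma Fw_double x j k : (k <= 2 ^ j)%N -> Fw x j.+1 k.*2 = Fw x j k.
Proof.
move=> k_le; rewrite FwS double_eq0.
have [->|k_gt0] := posnP k; first by rewrite Fw0.
have [->|k_neq] := eqVneq k (2 ^ j)%N; first by rewrite -mul2n -expnS eqxx Fw_top.
by rewrite -mul2n expnS eqn_pmul2l // (negbTE k_neq) mul2n odd_double doubleK.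
Qed.

Lemma Fw_doubleS x j k :
  Fw x j.+1 k.*2.+1 = Fw x j k + (Fw x j k.+1 - Fw x j k) *
    split_ratio (x j.+2 (4 * k + 1)%N) (x j.+2 (4 * k + 2)%N) (x j.+2 (4 * k + 3)%N).
Proof.
rewrite FwS /=.
have -> : (k.*2.+1 == 2 ^ j.+1)%N = false.
  by apply/negbTE/negP => /eqP/(congr1 odd); rewrite /= odd_double expnS oddM.
rewrite odd_double /= uphalf_double subn1 /= /split_ratio.
have -> : (4 * k.+1 - 1 = 4 * k + 3)%N by lia.
have -> : (4 * k.+1 - 2 = 4 * k + 2)%N by lia.
by have -> : (4 * k.+1 - 3 = 4 * k + 1)%N by lia.
Qed.

Lemma sum_pairs (h : nat -> R) m :
  \sum_(1 <= l < m.*2.+1) h l = \sum_(k < m) (h k.*2.+1 + h k.*2.+2).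
Proof.
elim: m => [|m IH]; first by rewrite big_geq // big_ord0.
by rewrite doubleS big_nat_recr //= big_nat_recr //= IH big_ord_recr /= addrA.
Qed.

Lemma Tint0 x f : Tint 0 x f = f (x 1%N 1%N).
Proof. by rewrite /Tint big_nat1 /Tweight /Tatom /= subr0 mul1r. Qed.

Lemma Tint_succE n x f : Tint n.+1 x f = \sum_(k < 2 ^ n)
  (Fw x n k.+1 - Fw x n k) *
    two_point_int f (x n.+2 (4 * k + 1)%N) (x n.+2 (4 * k + 2)%N)
                    (x n.+2 (4 * k + 3)%N).
Proof.
rewrite /Tint expnS mul2n sum_pairs; apply: eq_bigr => -[k /= k_lt] _.
rewrite /Tweight /Tatom /two_point_int.
rewrite (_ : (2 * k.*2.+1 - 1 = 4 * k + 1)%N); last lia.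
rewrite (_ : (2 * k.*2.+2 - 1 = 4 * k + 3)%N); last lia.
rewrite !subn1 !succnK -doubleS Fw_doubleS !Fw_double ?(ltnW k_lt) //.
by ring.
Qed.

End Fw_recursion.

Section sorted_row.
Variables (R : realType) (Th : set R).

Definition sorted_row_in (r : nat -> R) (N : nat) : Prop :=
  (forall k, (0 < k < N)%N -> Th (r k)) /\
  (forall k, (0 < k)%N -> (k.+1 < N)%N -> r k <= r k.+1).

Lemma sorted_row_quartet r N k : sorted_row_in r N -> (4 * k + 3 < N)%N ->
  [/\ Th (r (4 * k + 1)%N), Th (r (4 * k + 3)%N) &
      r (4 * k + 1)%N <= r (4 * k + 2)%N <= r (4 * k + 3)%N].
Proof.
move=> [rTh r_le] kN; split; [apply: rTh; lia|apply: rTh; lia|].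
have -> : (4 * k + 3 = (4 * k + 2).+1)%N by lia.
have -> : (4 * k + 2 = (4 * k + 1).+1)%N by lia.
by rewrite !r_le //; lia.
Qed.

End sorted_row.

Section Tint_continuity.
Variables (R : realType) (Th : set R) (n : nat) (x0 : nat -> nat -> R).
Variable F : set_system (nat -> nat -> R).
Context {FF : Filter F}.
Hypothesis cvg_coord : forall j l, (0 < j <= n.+1)%N -> (0 < l < 2 ^ j)%N ->
  x j l @[x --> F] --> x0 j l.
Hypothesis x0_regular : forall j a b, (0 < j <= n)%N -> (0 < a < b)%N ->
  (b < 2 ^ j)%N -> x0 j a != x0 j b.
Hypothesis x0_last_row : sorted_row_in Th (x0 n.+1) (2 ^ n.+1).
Hypothesis near_last_row : \forall x \near F, sorted_row_in Th (x n.+1) (2 ^ n.+1).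

Lemma Fw_cvg j l : (j < n)%N -> (l <= 2 ^ j)%N -> Fw x j l @[x --> F] --> Fw x0 j l.
Proof.
elim: j l => [|j IH] l j_lt l_le; first exact: cvg_cst.
have k_le : (l./2 <= 2 ^ j)%N by rewrite leq_half_double -mul2n -expnS ltnW.
move: l_le; rewrite -(odd_double_half l).
case: (odd l); rewrite ?add0n ?add1n => l_le.
- have k_lt : (l./2 < 2 ^ j)%N by rewrite -ltn_double -[(2 ^ j).*2]mul2n -expnS.
  rewrite Fw_doubleS; under eq_cvg do rewrite Fw_doubleS.
  have row_cvg i : (0 < i < 2 ^ j.+2)%N -> x j.+2 i @[x --> F] --> x0 j.+2 i.
    by move=> ?; apply: cvg_coord => //; lia.
  have i3_lt : (4 * l./2 + 3 < 2 ^ j.+2)%N by rewrite !expnS; lia.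
  apply: cvgD; first by apply: IH => //; lia.
  apply: cvgM; first by apply: cvgB; apply: IH => //; lia.
  apply: ratio00_cvg; try by apply: cvgB; apply: row_cvg; lia.
  by rewrite subr_eq0 eq_sym; apply: x0_regular; lia.
- by rewrite Fw_double //; under eq_cvg do rewrite Fw_double //; apply: IH => //; lia.
Qed.

Lemma Tint_cvg f : {within Th, continuous f} -> Tint n x f @[x --> F] --> Tint n x0 f.
Proof.
move=> fc; move: x0_last_row near_last_row.
case En: n => [|n'] x0_row near_row.
  rewrite Tint0; under eq_cvg do rewrite Tint0.
  apply: cvg_within_comp fc _ _ _; first by apply: cvg_coord.
    by case: x0_row => + _; apply.
  by apply: filterS _ near_row => x [+ _]; apply.
rewrite Tint_succE; under eq_cvg do rewrite Tint_succE.
apply: (@cvg_big R^o _ +%R 0 xpredT add_continuous) => // -[k /= k_lt] _.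
have k3_lt : (4 * k + 3 < 2 ^ n'.+2)%N by rewrite !expnS; lia.
apply: cvgM; first by apply: cvgB; apply: Fw_cvg; lia.
have [Thu0 Thv0 umv0] := sorted_row_quartet x0_row k3_lt.
apply: two_point_int_cvg fc _ _ _ Thu0 Thv0 umv0 _; try by apply: cvg_coord; lia.
by apply: filterS _ near_row => x /sorted_row_quartet/(_ k3_lt).
Qed.

End Tint_continuity.

Lemma continuous_normr_powR (R : realType) (p : R) : 1 <= p ->
  continuous (fun t : R => `|t| `^ p).
Proof.
move=> p_ge1 t; have p_neq0 : p != 0 by rewrite gt_eqF // (lt_le_trans ltr01 p_ge1).
have [->|t_neq0] := eqVneq t 0; last first.
  have t_gt0 : `|t| \in `]0, +oo[ by rewrite in_itv /= normr_gt0 t_neq0.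
  have powR_cont : {for `|t|, continuous (fun a : R => a `^ p)}.
    exact/differentiable_continuous/derivable1_diffP/derivable_powR.
  exact: (continuous_comp (@norm_continuous _ R^o t) powR_cont).
apply/cvgrPdist_lt => e e_gt0; apply/nbhs_ballP.
exists (Num.min 1 e) => /= [|u]; first by rewrite lt_min ltr01 e_gt0.
rewrite /ball /= sub0r normrN lt_min => /andP[u_lt1 u_lte].
rewrite normr0 powR0 // sub0r normrN ger0_norm ?powR_ge0 //.
have [->|u_neq0] := eqVneq u 0; first by rewrite normr0 powR0.
apply: le_lt_trans u_lte; apply: ge1r_powR => //.
by rewrite normr_gt0 u_neq0 ltW.
Qed.

Lemma le_sum_nat_term (R : numDomainType) (h : nat -> R) a b i :
  (forall k, 0 <= h k) -> (a <= i < b)%N -> h i <= \sum_(a <= k < b) h k.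
Proof.
move=> h_ge0 i_in; rewrite (bigD1_seq i) ?mem_index_iota ?iota_uniq //=.
by rewrite lerDl sumr_ge0.
Qed.

Section RBC_arrays.
Variables (R : realType) (Th : set R) (n : nat).
Implicit Types x y : nat -> nat -> R.

Lemma coord_le_arr_dist x y j l : (0 < j <= n.+1)%N -> (0 < l < 2 ^ j)%N ->
  `|x j l - y j l| <= arr_dist n x y.
Proof.
move=> j_in l_in; have sq_ge0 k i : 0 <= (x k i - y k i) ^+ 2 by exact: sqr_ge0.
rewrite /arr_dist -sqrtr_sqr ler_sqrt; last by do 2 (apply: sumr_ge0 => ? _).
have row_le := le_sum_nat_term (h := fun i => (x j i - y j i) ^+ 2) (sq_ge0 j) l_in.
apply: le_trans row_le _.
apply: (le_sum_nat_term (h := fun k => \sum_(1 <= i < 2 ^ k) (x k i - y k i) ^+ 2)).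
  by move=> k; apply: sumr_ge0.
exact: j_in.
Qed.

Lemma RBC_regular x : RBC Th n x ->
  forall j a b, (0 < j <= n)%N -> (0 < a < b)%N -> (b < 2 ^ j)%N -> x j a != x j b.
Proof.
move=> [G [_ _ regG sbaG]] j a b /andP[j_gt0 j_le] /andP[a_gt0 ab] b_lt.
have nE : n = (j + (n - j))%N by rewrite subnKC.
have sba_lift c : (0 < c < 2 ^ j)%N -> sba G Th n (c * 2 ^ (n - j)) = (x j c)%:E.
  by move=> c_in; rewrite {1}nE sba_mul_exp2 ?sbaG //; lia.
have b_lift : (b * 2 ^ (n - j) < 2 ^ n)%N by rewrite {2}nE expnD ltn_pmul2r ?expn_gt0.
have ab_lift : (a * 2 ^ (n - j) < b * 2 ^ (n - j))%N by rewrite ltn_pmul2r ?expn_gt0.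
have a_lift : (0 < a * 2 ^ (n - j))%N by rewrite muln_gt0 a_gt0 expn_gt0.
have a_in : (0 < a * 2 ^ (n - j) < 2 ^ n)%N.
  by rewrite a_lift (ltn_trans ab_lift b_lift).
have b_in : (0 < b * 2 ^ (n - j) < 2 ^ n)%N.
  by rewrite (ltn_trans a_lift ab_lift) b_lift.
have := regG _ _ a_in b_in (negbT (ltn_eqF ab_lift)).
rewrite !sba_lift; first by apply: contra_neq => ->.
- by rewrite (ltn_trans a_gt0 ab).
- by rewrite a_gt0 (ltn_trans ab b_lt).
Qed.

Lemma RBC_last_row x : admissible_Theta Th -> RBC Th n x ->
  sorted_row_in Th (x n.+1) (2 ^ n.+1).
Proof.
move=> admTh [G [suppG meanG _ sbaG]].
have last_in : (0 < n.+1 <= n.+1)%N by rewrite leqnn.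
split => k.
  move=> k_in; have k_le : (k <= 2 ^ n.+1)%N by case/andP: k_in => _ /ltnW.
  exact: (sba_in_Theta admTh suppG meanG _ k_le (sbaG _ _ last_in k_in)).
move=> k_gt0 k_lt; have k_in : (0 < k < 2 ^ n.+1)%N by rewrite k_gt0 ltnW.
have := sba_le_succ admTh suppG meanG (ltn0Sn n) (ltnW k_lt).
by rewrite (sbaG _ _ last_in k_in) (sbaG _ k.+1 last_in) ?lee_fin.
Qed.

End RBC_arrays.

Section RBC_neighbourhoods.
Variables (R : realType) (Th : set R) (n : nat) (x0 : nat -> nat -> R).

Definition RBC_ball (d : R) := [set x | RBC Th n x /\ arr_dist n x x0 < d].

Definition RBC_nbhs := filter_from [set d : R | 0 < d] RBC_ball.

Global Instance RBC_nbhs_filter : Filter RBC_nbhs.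
Proof.
apply: filter_from_filter; first by exists 1; rewrite /= ltr01.
move=> d1 d2 d1_gt0 d2_gt0; exists (Num.min d1 d2); first by rewrite /= lt_min d1_gt0.
by move=> x [rbcx]; rewrite /= lt_min => /andP[dx1 dx2].
Qed.

Lemma near_RBC_nbhsP (P : (nat -> nat -> R) -> Prop) :
  (\forall x \near RBC_nbhs, P x) ->
  exists2 d : R, 0 < d & forall x, RBC Th n x -> arr_dist n x x0 < d -> P x.
Proof. by case=> d d_gt0 dP; exists d => // x rbcx dx; exact: dP. Qed.

Hypotheses (admTh : admissible_Theta Th) (rbc0 : RBC Th n x0).

Lemma Tint_near f e : {within Th, continuous f} -> 0 < e ->
  \forall x \near RBC_nbhs, `|Tint n x f - Tint n x0 f| < e.
Proof.
move=> fc e_gt0.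
have : Tint n x f @[x --> RBC_nbhs] --> Tint n x0 f.
  apply: Tint_cvg fc.
  - move=> j l j_in l_in; apply/cvgrPdist_lt => d d_gt0; exists d => // x [_ dx].
    by rewrite /= distrC; exact: le_lt_trans (coord_le_arr_dist _ _ j_in l_in) dx.
  - exact: RBC_regular rbc0.
  - exact: RBC_last_row admTh rbc0.
  - by exists 1 => [|x [rbcx _]]; [rewrite /= ltr01|exact: RBC_last_row].
by move=> /cvgrPdist_lt/(_ e e_gt0); apply: filterS => x; rewrite distrC.
Qed.

End RBC_neighbourhoods.

Unset Implicit Arguments. Set Strict Implicit.

Theorem lemma8 (R : realType) (Th : set R) (n : nat) :
  admissible_Theta Th ->
  (* (i) continuity into P(Theta) with the weak topology *)
  (forall x0 : nat -> nat -> R, RBC Th n x0 ->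
    forall (m : nat) (f : 'I_m -> R -> R) (eps : 'I_m -> R),
      (forall i, {within Th, continuous (f i)} /\ bounded_on Th (f i)) ->
      (forall i, 0 < eps i) ->
      exists2 d : R, 0 < d &
        forall x, RBC Th n x -> arr_dist n x x0 < d ->
          forall i, `|Tint n x (f i) - Tint n x0 (f i)| < eps i)
  /\
  (* (ii) continuity into P_p(Theta) with the p-Wasserstein-type topology *)
  (forall p : R, 1 <= p ->
   forall x0 : nat -> nat -> R, RBC Th n x0 ->
    forall (m : nat) (f : 'I_m -> R -> R) (eps : 'I_m -> R)
           (use_moment : bool) (eps0 : R),
      (forall i, {within Th, continuous (f i)} /\ bounded_on Th (f i)) ->
      (forall i, 0 < eps i) -> 0 < eps0 ->
      exists2 d : R, 0 < d &
        forall x, RBC Th n x -> arr_dist n x x0 < d ->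
          (forall i, `|Tint n x (f i) - Tint n x0 (f i)| < eps i) /\
          (use_moment ->
            `|Tint n x (fun t => `|t| `^ p) - Tint n x0 (fun t => `|t| `^ p)| < eps0)).
Proof.
move=> admTh; split.
  move=> x0 rbc0 m f eps f_ok eps_gt0; apply: near_RBC_nbhsP.
  by apply: filter_forall => i; apply: Tint_near => //; case: (f_ok i).
move=> p p_ge1 x0 rbc0 m f eps mom eps0 f_ok eps_gt0 eps0_gt0.
apply: near_RBC_nbhsP; near=> x; split; [|move=> _]; near: x.
  by apply: filter_forall => i; apply: Tint_near => //; case: (f_ok i).
apply: Tint_near => //; apply: continuous_subspaceT; exact: continuous_normr_powR.
Unshelve. all: by end_near.
Qed.
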